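(* There is an algorithm which, given a skew-merged permutation of size $n$, computes in $O(n)$ time the type (NE, NW, SW, SE, or central) of each of its elements.
   Context: Permutations are identified with their sets of points $(i,\sigma(i))$ with the usual left/right/above/below relations. A permutation is skew-merged if its points can be partitioned into an increasing and a decreasing subsequence (equivalently, it avoids $3412$ and $2143$). An element of a skew-merged permutation is of type NE if it plays the role of the $3$ in an occurrence of $213$; NW if it plays the $3$ in an occurrence of $312$; SW if it plays the $1$ in an occurrence of $132$; SE if it plays the $1$ in an occurrence of $231$; it is central if it has none of these types. (The four non-central types are pairwise disjoint.) *)

From mathcomp Require Import all_boot.
Set Implicit Arguments. Unset Strict Implicit. Unset Printing Implicit Defensive.

Definition is_perm (p : seq nat) : Prop := perm_eq p (iota 0 (size p)).

Definition skew_merged (p : seq nat) : Prop :=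
  is_perm p /\
  exists m : bitseq, size m = size p /\
    sorted ltn (mask m p) /\ sorted gtn (mask (map negb m) p).

Definition at_ (p : seq nat) (i : nat) : nat := nth 0 p i.

Definition is_NE (p : seq nat) (j : nat) : Prop :=
  exists a b, a < b /\ b < j /\ at_ p b < at_ p a /\ at_ p a < at_ p j.
Definition is_NW (p : seq nat) (j : nat) : Prop :=
  exists b c, j < b /\ b < c /\ c < size p /\ at_ p b < at_ p c /\ at_ p c < at_ p j.
Definition is_SW (p : seq nat) (j : nat) : Prop :=
  exists b c, j < b /\ b < c /\ c < size p /\ at_ p j < at_ p c /\ at_ p c < at_ p b.
Definition is_SE (p : seq nat) (j : nat) : Prop :=
  exists a b, a < b /\ b < j /\ at_ p j < at_ p a /\ at_ p a < at_ p b.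
Definition is_central (p : seq nat) (j : nat) : Prop :=
  ~ is_NE p j /\ ~ is_NW p j /\ ~ is_SW p j /\ ~ is_SE p j.

Definition correct_code (p : seq nat) (j o : nat) : Prop :=
  [/\ o = 0 <-> is_central p j, o = 1 <-> is_NE p j, o = 2 <-> is_NW p j,
      o = 3 <-> is_SW p j & o = 4 <-> is_SE p j].

(* Computation model: a word RAM.  Registers and memory cells hold     *)
(* costs one unit; expressions are of fixed size in a program, so they *)
(* cost O(1).                                                          *)

Inductive expr : Type :=
| EConst of nat
| EReg of nat
| ELoad of expr
| EAdd of expr & expr
| ESub of expr & expr         (* truncated subtraction *)
| ELt of expr & expr
| EEq of expr & expr.

Inductive stmt : Type :=
| SSkip
| SAssign of nat & expr
| SStore of expr & expr
| SSeq of stmt & stmt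
| SIf of expr & stmt & stmt
| SWhile of expr & stmt.

Record state : Type := State { regs : nat -> nat; heap : nat -> nat }.

Definition chk (W v : nat) : option nat := if v <= W then Some v else None.

Fixpoint eval (W : nat) (s : state) (e : expr) : option nat :=
  match e with
  | EConst c => chk W c
  | EReg r => chk W (regs s r)
  | ELoad a => obind (fun x => chk W (heap s x)) (eval W s a)
  | EAdd e1 e2 => obind (fun x => obind (fun y => chk W (x + y)) (eval W s e2)) (eval W s e1)
  | ESub e1 e2 => obind (fun x => obind (fun y => chk W (x - y)) (eval W s e2)) (eval W s e1)
  | ELt e1 e2 => obind (fun x => obind (fun y => Some (nat_of_bool (x < y))) (eval W s e2)) (eval W s e1)
  | EEq e1 e2 => obind (fun x => obind (fun y => Some (nat_of_bool (x == y))) (eval W s e2)) (eval W s e1)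
  end.

Definition upd (f : nat -> nat) (k v : nat) : nat -> nat :=
  fun x => if x == k then v else f x.

Inductive exec (W : nat) : stmt -> state -> nat -> state -> Prop :=
| ExSkip s : exec W SSkip s 1 s
| ExAssign s r e v : eval W s e = Some v ->
    exec W (SAssign r e) s 1 (State (upd (regs s) r v) (heap s))
| ExStore s e1 e2 a v : eval W s e1 = Some a -> eval W s e2 = Some v ->
    exec W (SStore e1 e2) s 1 (State (regs s) (upd (heap s) a v))
| ExSeq c1 c2 s1 s2 s3 t1 t2 : exec W c1 s1 t1 s2 -> exec W c2 s2 t2 s3 ->
    exec W (SSeq c1 c2) s1 (t1 + t2) s3
| ExIfT e c1 c2 s s' v t : eval W s e = Some v -> v != 0 -> exec W c1 s t s' ->
    exec W (SIf e c1 c2) s t.+1 s'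
| ExIfF e c1 c2 s s' t : eval W s e = Some 0 -> exec W c2 s t s' ->
    exec W (SIf e c1 c2) s t.+1 s'
| ExWhileF e c s : eval W s e = Some 0 -> exec W (SWhile e c) s 1 s
| ExWhileT e c s1 s2 s3 v t1 t2 : eval W s1 e = Some v -> v != 0 ->
    exec W c s1 t1 s2 -> exec W (SWhile e c) s2 t2 s3 ->
    exec W (SWhile e c) s1 (t1 + t2).+1 s3.

(* Input convention: register 0 holds n, memory cells 0..n-1 hold
   p_0..p_{n-1}, everything else is 0.  Output: cell n+j holds the code
   of the type of the element at position j. *)
Definition init_state (p : seq nat) : state :=
  State (fun r => if r == 0 then size p else 0) (fun a => nth 0 p a).

From mathcomp Require Import all_boot zify.
From Stdlib Require Import Classical.
Set Implicit Arguments. Unset Strict Implicit.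

(* Position j is NE iff before it there is a pair a < b with p_b < p_a < p_j,
   i.e. iff the least value f playing the 2 of a 21 pattern in the prefix is
   below p_j.  A value plays such a 2 exactly once a smaller value arrives
   after it, so a left-to-right scan keeps the values not yet undercut on an
   increasing stack: each new value pops the larger ones, folding them into
   f, and is then pushed.  Every value is pushed and popped at most once, so
   the scan is linear.  The NW, SE and SW elements are the NE elements of the
   reverse, the complement and the reverse complement, and in a skew-merged
   permutation the four types are disjoint; hence four scans, each writing
   its code over the previous ones, classify every element. *)

Lemma mem_mask_nth (s : seq nat) (m : bitseq) x :
  x < size s -> nth false m x -> nth 0 s x \in mask m s.
Proof.
elim: s m x => [|z s IH] [|b m] [|x] //= Hx Hb; first by rewrite Hb mem_head.
by case: b (IH m x Hx Hb) => //= H; rewrite in_cons H orbT.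
Qed.

Lemma sorted_mask_nth (r : rel nat) (s : seq nat) (m : bitseq) x y :
  transitive r -> sorted r (mask m s) -> x < y -> y < size s ->
  nth false m x -> nth false m y -> r (nth 0 s x) (nth 0 s y).
Proof.
move=> tr; elim: s m x y => [|z s IH] [|b m] x [|y] //=; rewrite ?nth_nil //.
case: x => [|x] /= Hs Hxy Hy Hb Hm.
- rewrite Hb in Hs; apply: (allP (order_path_min tr Hs)); exact: mem_mask_nth.
- by apply: (IH m) => //; case: b Hs => //= /path_sorted.
Qed.

Section SkewMergedTypes.
Variables (p : seq nat) (m : bitseq).
Hypotheses (Hsz : size m = size p) (Hinc : sorted ltn (mask m p))
  (Hdec : sorted gtn (mask (map negb m) p)).

Definition colour_ordered x y : Prop :=
  if nth false m x then (if nth false m y then is_true (at_ p x < at_ p y) else True)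
  else (if nth false m y then True else is_true (at_ p y < at_ p x)).

Lemma colour_orderedP x y : x < y -> y < size p -> colour_ordered x y.
Proof.
move=> Hxy Hy; rewrite /colour_ordered /at_.
case Ex: (nth false m x); case Ey: (nth false m y) => //.
- exact: (sorted_mask_nth ltn_trans Hinc).
- have gtn_trans : transitive gtn by move=> a b c h1 h2; exact: ltn_trans h2 h1.
  apply: (sorted_mask_nth gtn_trans Hdec) => //;
  rewrite (nth_map false) ?Ex ?Ey //; lia.
Qed.

Lemma left_right_types_disjoint j : j < size p ->
  is_NE p j \/ is_SE p j -> is_NW p j \/ is_SW p j -> False.
Proof.
move=> Hj HL HR.
have [a [b [hab [hbj hL]]]] : exists a b, a < b /\ b < j /\
   (at_ p b < at_ p a /\ at_ p a < at_ p j \/ at_ p j < at_ p a /\ at_ p a < at_ p b).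
  by case: HL => -[a [b [? [? [? ?]]]]]; exists a, b; tauto.
have [b' [c [hjb [hbc [hc hR]]]]] : exists b c, j < b /\ b < c /\ c < size p /\
   (at_ p b < at_ p c /\ at_ p c < at_ p j \/ at_ p j < at_ p c /\ at_ p c < at_ p b).
  by case: HR => -[b0 [c [? [? [? [? ?]]]]]]; exists b0, c; tauto.
have C x y : x < y -> y < size p -> colour_ordered x y := @colour_orderedP x y.
move: (C a b ltac:(lia) ltac:(lia)) (C a j ltac:(lia) ltac:(lia)) (C a b' ltac:(lia) ltac:(lia))
  (C a c ltac:(lia) ltac:(lia)) (C b j ltac:(lia) ltac:(lia)) (C b b' ltac:(lia) ltac:(lia))
  (C b c ltac:(lia) ltac:(lia)) (C j b' ltac:(lia) ltac:(lia)) (C j c ltac:(lia) ltac:(lia))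
  (C b' c ltac:(lia) ltac:(lia)).
rewrite /colour_ordered; case: hL; case: hR.
all: case: (nth false m a); case: (nth false m b); case: (nth false m j);
  case: (nth false m b'); case: (nth false m c) => /=; lia.
Qed.

Lemma NE_SE_disjoint j : j < size p -> is_NE p j -> is_SE p j -> False.
Proof.
move=> Hj [a [b [hab [hbj [h1 h2]]]]] [a' [b' [gab [gbj [g1 g2]]]]].
move: (colour_orderedP hab (ltn_trans hbj Hj)) (colour_orderedP (ltn_trans hab hbj) Hj)
  (colour_orderedP hbj Hj) (colour_orderedP gab (ltn_trans gbj Hj))
  (colour_orderedP (ltn_trans gab gbj) Hj) (colour_orderedP gbj Hj).
rewrite /colour_ordered.
case: (nth false m a); case: (nth false m b); case: (nth false m j);
case: (nth false m a'); case: (nth false m b') => /=; lia.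
Qed.

Lemma NW_SW_disjoint j : is_NW p j -> is_SW p j -> False.
Proof.
move=> [b [c [hjb [hbc [hc [h1 h2]]]]]] [b' [c' [gjb [gbc [gc [g1 g2]]]]]].
move: (colour_orderedP hjb (ltn_trans hbc hc)) (colour_orderedP (ltn_trans hjb hbc) hc)
  (colour_orderedP hbc hc) (colour_orderedP gjb (ltn_trans gbc gc))
  (colour_orderedP (ltn_trans gjb gbc) gc) (colour_orderedP gbc gc).
rewrite /colour_ordered.
case: (nth false m j); case: (nth false m b); case: (nth false m c);
case: (nth false m b'); case: (nth false m c') => /=; lia.
Qed.

End SkewMergedTypes.

Definition is_NE_of (q : nat -> nat) (j : nat) : Prop :=
  exists a b, a < b /\ b < j /\ q b < q a /\ q a < q j.

Definition mirror (n : nat) (dir : bool) (j : nat) : nat := if dir then n.-1 - j else j.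

Lemma mirror_lt n dir j : j < n -> mirror n dir j < n.
Proof. by rewrite /mirror; case: dir; lia. Qed.

Lemma mirrorK n dir j : j < n -> mirror n dir (mirror n dir j) = j.
Proof. by rewrite /mirror; case: dir; lia. Qed.

Lemma mirror_inj n dir j k : j < n -> k < n -> mirror n dir j = mirror n dir k -> j = k.
Proof. by rewrite /mirror; case: dir; lia. Qed.

Section StackScan.
Variables (n : nat) (q : nat -> nat).

(* State of the scan after the first [i] values: [f] is the least value
   playing the 2 of a 21 pattern, or [n] if there is none; the stack
   [stk 1 <= ... <= stk sp] (with sentinel [stk 0 = 0]) holds every value
   that no later value is smaller than. *)
Record stack_inv (i sp : nat) (stk : nat -> nat) (f : nat) : Prop := {
  stack_sp_le : sp <= i;
  stack_f_le : f <= n;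
  stack_bottom : stk 0 = 0;
  stack_sorted : forall k, k < sp -> stk k <= stk k.+1;
  stack_values : forall k, 0 < k <= sp -> exists2 a, a < i & stk k = q a;
  stack_f_lower : forall a b, a < b -> b < i -> q b < q a -> f <= q a;
  stack_f_attained : f < n -> exists a b, a < b /\ b < i /\ q b < q a /\ q a <= f;
  stack_cover : forall a, a < i ->
    (exists b, a < b /\ b < i /\ q b < q a) \/ (exists2 k, 0 < k <= sp & stk k = q a) }.

(* Popping the stack down to height [sp'] above [x], folding the popped
   values into the minimum [f']. *)
Definition pop_result (stk : nat -> nat) (sp x f sp' f' : nat) : Prop :=
  [/\ sp' <= sp, stk sp' <= x,
      forall k, sp' < k <= sp -> x < stk k /\ f' <= stk k,
      f' <= f
    & f' = f \/ exists2 k, sp' < k <= sp & f' = stk k].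

Lemma stack_inv_init stk : stk 0 = 0 -> stack_inv 0 0 stk n.
Proof. by move=> H0; split => // [a b|] *; lia. Qed.

Lemma pop_result_stop stk sp x f : stk sp <= x -> pop_result stk sp x f sp f.
Proof. by move=> H; split => // [k|]; [lia | left]. Qed.

Lemma pop_result_pop stk sp x f sp' f' : x < stk sp.+1 ->
  pop_result stk sp x (minn (stk sp.+1) f) sp' f' -> pop_result stk sp.+1 x f sp' f'.
Proof.
move=> hx [hsp' hstop hpopped hf' hf'_eq]; split; [lia | done | | lia | ].
- move=> k hk; case: (ltnP k sp.+1) => hk'; first by apply: hpopped; lia.
  have -> : k = sp.+1 by lia.
  by split => //; lia.
- case: hf'_eq => [-> | [k hk ->]]; last by right; exists k => //; lia.
  case: (leqP (stk sp.+1) f) => h; last by left; lia.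
  by right; exists sp.+1; [lia | lia].
Qed.

Lemma pop_result_ext stk stk' sp x f sp' f' :
  stk =1 stk' -> pop_result stk sp x f sp' f' -> pop_result stk' sp x f sp' f'.
Proof.
move=> E [h1 h2 h3 h4 h5]; split => //; first by rewrite -E.
- by move=> k hk; rewrite -E; apply: h3.
- by case: h5 => [|[k hk ->]]; [left | right; exists k].
Qed.

Lemma stack_inv_ext i sp stk stk' f :
  stk =1 stk' -> stack_inv i sp stk f -> stack_inv i sp stk' f.
Proof.
move=> E [H1 H2 H3 H4 H5 H6 H7 H8]; split => //.
- by rewrite -E.
- by move=> k hk; rewrite -!E; exact: H4.
- by move=> k hk; rewrite -E; exact: H5.
- by move=> a ha; case: (H8 a ha) => [|[k hk]]; [left | right; exists k; rewrite -?E].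
Qed.

Lemma stack_monotone i sp stk f k l : stack_inv i sp stk f ->
  k <= l -> l <= sp -> stk k <= stk l.
Proof.
move=> I; elim: l => [|l IH] hkl hl; first by have -> : k = 0 by lia.
case: (ltnP k l.+1) => h; last by have -> : k = l.+1 by lia.
by apply: leq_trans (IH _ _) (stack_sorted I _); lia.
Qed.

Lemma stack_inv_NE i sp stk f : stack_inv i sp stk f -> q i < n ->
  is_NE_of q i <-> f < q i.
Proof.
move=> I hi; split => [[a [b [hab [hbi [hba hai]]]]]|hf].
- by have := stack_f_lower I hab hbi hba; lia.
- have [|a [b [hab [hbi [hba haf]]]]] := stack_f_attained I; first lia.
  by exists a, b; repeat split; lia.
Qed.

Lemma stack_inv_step i sp stk f sp' f' :
  stack_inv i sp stk f -> pop_result stk sp (q i) f sp' f' ->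
  stack_inv i.+1 sp'.+1 (upd stk sp'.+1 (q i)) f'.
Proof.
move=> I [hsp' hx hpopped hf' hf'_eq]; rewrite /upd.
have mono := stack_monotone I.
have hsp := stack_sp_le I.
split.
- lia.
- by have := stack_f_le I; lia.
- exact: stack_bottom I.
- move=> k hk; have -> : (k == sp'.+1) = false by apply/eqP; lia.
  case: (eqVneq k.+1 sp'.+1) => [e | ne]; first by have -> : k = sp' by lia.
  by apply: (stack_sorted I); move/eqP: ne; lia.
- move=> k hk; case: (eqVneq k sp'.+1) => [_ | ne]; first by exists i.
  have [|a ha ->] := stack_values I (k := k); first by move/eqP: ne; lia.
  by exists a => //; lia.
- move=> a b hab hbi hba.
  case: (ltnP b i) => hb; first by have := stack_f_lower I hab hb hba; lia.
  have eb : b = i by lia.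
  subst b; case: (stack_cover I hab) => [[b [hab' [hbi' hba']]] | [k hk hka]].
  + by have := stack_f_lower I hab' hbi' hba'; lia.
  + case: (leqP k sp') => hk'; first by have := mono _ _ hk' hsp'; lia.
    by have [_ ] := hpopped k (ltac:(lia)); lia.
- move=> hf; case: hf'_eq => [ef | [k hk ef]].
  + have [|a [b [hab [hbi [hba haf]]]]] := stack_f_attained I; first lia.
    by exists a, b; repeat split; lia.
  + have [|a ha hka] := stack_values I (k := k); first lia.
    have [hxk _] := hpopped k hk.
    by exists a, i; repeat split; lia.
- move=> a ha; case: (eqVneq a i) => [-> | ne].
  + by right; exists sp'.+1; rewrite ?eqxx ?leqnn.
  + case: (stack_cover I (a := a) (ltac:(move/eqP: ne; lia))) =>
      [[b [hab [hbi hba]]] | [k hk hka]].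
    * by left; exists b; repeat split; lia.
    * case: (leqP k sp') => hk'.
      -- right; exists k; first lia.
         by have -> : (k == sp'.+1) = false by apply/eqP; lia.
      -- have [hxk _] := hpopped k (ltac:(lia)).
         by left; exists i; repeat split; [move/eqP: ne; lia | lia | lia].
Qed.

End StackScan.

Section Views.
Variable p : seq nat.
Local Notation n := (size p).
Hypothesis p_lt : forall a, a < n -> nth 0 p a < n.

Definition view_at (dir comp : bool) (j : nat) : nat :=
  let v := nth 0 p (mirror n dir j) in if comp then n.-1 - v else v.

Lemma view_lt dir comp j : j < n -> view_at dir comp j < n.
Proof.
move=> hj; have := p_lt (mirror_lt dir hj); rewrite /view_at; case: comp; lia.
Qed.

Lemma NE_view_NW j : j < n -> is_NE_of (view_at true false) (mirror n true j) <-> is_NW p j.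
Proof.
move=> hj; rewrite /is_NE_of /view_at /mirror /is_NW /at_ /=.
have -> : n.-1 - (n.-1 - j) = j by lia.
split => [[a [b [hab [hb [h1 h2]]]]] | [b [c [hjb [hbc [hc [h1 h2]]]]]]].
- by exists (n.-1 - b), (n.-1 - a); lia.
- exists (n.-1 - c), (n.-1 - b).
  have -> : n.-1 - (n.-1 - b) = b by lia.
  have -> : n.-1 - (n.-1 - c) = c by lia.
  lia.
Qed.

Lemma NE_view_SE j : j < n -> is_NE_of (view_at false true) j <-> is_SE p j.
Proof.
move=> hj; rewrite /is_NE_of /view_at /mirror /is_SE /at_ /=.
split => -[a [b [hab [hbj [h1 h2]]]]]; exists a, b;
have := p_lt (ltac:(lia) : a < n); have := p_lt (ltac:(lia) : b < n); have := p_lt hj; lia.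
Qed.

Lemma NE_view_SW j : j < n -> is_NE_of (view_at true true) (mirror n true j) <-> is_SW p j.
Proof.
move=> hj; rewrite /is_NE_of /view_at /mirror /is_SW /at_ /=.
have -> : n.-1 - (n.-1 - j) = j by lia.
split => [[a [b [hab [hb [h1 h2]]]]] | [b [c [hjb [hbc [hc [h1 h2]]]]]]].
- exists (n.-1 - b), (n.-1 - a).
  have := p_lt (ltac:(lia) : n.-1 - a < n); have := p_lt (ltac:(lia) : n.-1 - b < n).
  have := p_lt hj; lia.
- exists (n.-1 - c), (n.-1 - b).
  have -> : n.-1 - (n.-1 - b) = b by lia.
  have -> : n.-1 - (n.-1 - c) = c by lia.
  have := p_lt (ltac:(lia) : c < n); have := p_lt (ltac:(lia) : b < n); have := p_lt hj; lia.
Qed.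

Definition type_of_view (dir comp : bool) : seq nat -> nat -> Prop :=
  match dir, comp with
  | false, false => is_NE | true, false => is_NW
  | false, true => is_SE | true, true => is_SW
  end.

Lemma NE_view_type dir comp j : j < n ->
  is_NE_of (view_at dir comp) (mirror n dir j) <-> type_of_view dir comp p j.
Proof.
case: dir; case: comp => hj /=; [exact: NE_view_SW | exact: NE_view_NW | | by []].
exact: NE_view_SE.
Qed.

End Views.

Arguments chk : simpl never.
Arguments upd f k v x /.

Lemma chkE W v : v <= W -> chk W v = Some v.
Proof. by rewrite /chk => ->. Qed.

Ltac eval_simpl :=
  rewrite /=; repeat (rewrite chkE /=; last lia); try done; try (congr Some; lia).

(* Register use: r0 = n, r1 = scan index, r2 = stack height, r3 = f,
   r4 = current value, r5 = its position.  Cell n + j is the output for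
   position j and the stack occupies the cells from 2n on. *)
Definition stack_base : expr := EAdd (EReg 0) (EReg 0).
Definition stack_top : expr := ELoad (EAdd stack_base (EReg 2)).
Definition pop_body : stmt :=
  SSeq (SIf (ELt stack_top (EReg 3)) (SAssign 3 stack_top) SSkip)
       (SAssign 2 (ESub (EReg 2) (EConst 1))).
Definition pop_loop : stmt := SWhile (ELt (EReg 4) stack_top) pop_body.

Section RamStack.
Variables (W n : nat).
Hypothesis HW : 4 * n + 4 <= W.

Definition stack_of (s : state) (k : nat) : nat := heap s (n + n + k).

Lemma pop_body_ok s sp : regs s 0 = n -> regs s 2 = sp.+1 -> sp < n ->
  stack_of s sp.+1 <= n -> regs s 3 <= n ->
  exists s1, [/\ exec W pop_body s 3 s1, heap s1 = heap s,
    (forall r, r != 2 -> r != 3 -> regs s1 r = regs s r), regs s1 2 = sp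
  & regs s1 3 = minn (stack_of s sp.+1) (regs s 3)].
Proof.
move=> H0 H2 Hsp Htop H3; rewrite /stack_of in Htop *.
case: (ltnP (heap s (n + n + sp.+1)) (regs s 3)) => Hlt.
- pose s0 := State (upd (regs s) 3 (heap s (n + n + sp.+1))) (heap s).
  exists (State (upd (regs s0) 2 sp) (heap s0)); split => //.
  + apply: (@ExSeq _ _ _ _ s0 _ 2 1).
    * apply: (@ExIfT _ _ _ _ _ _ 1) => //.
        by eval_simpl; rewrite H0 H2; eval_simpl; rewrite Hlt.
      by apply: ExAssign; eval_simpl; rewrite H0 H2; eval_simpl.
    * by apply: ExAssign; eval_simpl; rewrite H2; eval_simpl.
  + by move=> r /= /negbTE -> /negbTE ->.
- exists (State (upd (regs s) 2 sp) (heap s)); split => //.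
  + apply: (@ExSeq _ _ _ _ s _ 2 1).
    * apply: ExIfF; last exact: ExSkip.
      by eval_simpl; rewrite H0 H2; eval_simpl; rewrite ltnNge Hlt.
    * by apply: ExAssign; eval_simpl; rewrite H2; lia.
  + by move=> r /= /negbTE ->.
Qed.

Lemma pop_loop_stop s sp x : regs s 0 = n -> regs s 2 = sp -> sp <= n -> regs s 4 = x -> x < n ->
  stack_of s sp <= x -> stack_of s sp <= n ->
  exists s' t, [/\ exec W pop_loop s t s', heap s' = heap s,
    (forall r, r != 2 -> r != 3 -> regs s' r = regs s r),
    t <= 4 * (sp - regs s' 2) + 1
  & pop_result (stack_of s) sp x (regs s 3) (regs s' 2) (regs s' 3)].
Proof.
move=> H0 H2 Hsp H4 hx hstop htop; exists s, 1; split => //.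
- apply: ExWhileF; rewrite /stack_top; eval_simpl; rewrite H0 H2 H4; eval_simpl.
  by move: hstop htop; rewrite /stack_of => hstop htop; eval_simpl; rewrite ltnNge hstop.
- by rewrite H2; lia.
- by rewrite H2; exact: pop_result_stop.
Qed.

Lemma pop_loop_ok sp : forall s x, regs s 0 = n -> regs s 2 = sp -> sp <= n ->
  regs s 4 = x -> x < n -> regs s 3 <= n -> stack_of s 0 = 0 ->
  (forall k, k <= sp -> stack_of s k <= n) ->
  exists s' t, [/\ exec W pop_loop s t s', heap s' = heap s,
    (forall r, r != 2 -> r != 3 -> regs s' r = regs s r),
    t <= 4 * (sp - regs s' 2) + 1
  & pop_result (stack_of s) sp x (regs s 3) (regs s' 2) (regs s' 3)].
Proof.
elim: sp => [|sp IH] s x H0 H2 Hsp H4 Hx H3 Hbot Hval.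
  by apply: pop_loop_stop => //; rewrite Hbot.
have Htop : stack_of s sp.+1 <= n by apply: Hval.
case: (ltnP x (stack_of s sp.+1)) => Hxt; last exact: pop_loop_stop.
have [s1 [E1 Hh1 Hr1 H21 H31]] := pop_body_ok H0 H2 Hsp Htop H3.
have St1 : stack_of s1 =1 stack_of s by move=> k; rewrite /stack_of Hh1.
have [s' [t' [E' Hh' Hr' Ht' P]]] := IH s1 x ltac:(by rewrite Hr1) H21 ltac:(lia)
  ltac:(by rewrite Hr1) Hx ltac:(by rewrite H31; lia) ltac:(by rewrite St1)
  ltac:(by move=> k hk; rewrite St1; apply: Hval; lia).
exists s', (3 + t').+1; split.
- apply: (@ExWhileT _ _ _ _ _ _ 1) => //; last exact: E'; last exact: E1.
  rewrite /stack_top; eval_simpl; rewrite H0 H2 H4; eval_simpl.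
  by move: Hxt Htop; rewrite /stack_of => Hxt Htop; eval_simpl.
- by rewrite Hh' Hh1.
- by move=> r r2 r3; rewrite Hr' // Hr1.
- by case: P; lia.
- apply: pop_result_pop => //; rewrite -H31.
  by move: P; rewrite /stack_of Hh1.
Qed.

Definition scan_push : stmt :=
  SSeq pop_loop (SSeq (SAssign 2 (EAdd (EReg 2) (EConst 1)))
    (SSeq (SStore (EAdd stack_base (EReg 2)) (EReg 4))
          (SAssign 1 (EAdd (EReg 1) (EConst 1))))).

Lemma scan_push_exec s i x : regs s 0 = n -> regs s 1 = i -> i < n -> regs s 2 <= i ->
  regs s 4 = x -> x < n -> regs s 3 <= n -> stack_of s 0 = 0 ->
  (forall k, k <= regs s 2 -> stack_of s k <= n) ->
  exists s' t sp' f', [/\ exec W scan_push s t s', t + 4 * sp'.+1 <= 8 + 4 * regs s 2,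
    pop_result (stack_of s) (regs s 2) x (regs s 3) sp' f',
    [/\ regs s' 0 = n, regs s' 1 = i.+1, regs s' 2 = sp'.+1 & regs s' 3 = f']
  & heap s' =1 upd (heap s) (n + n + sp'.+1) x].
Proof.
move=> H0 H1 hi Hsp H4 hx HF Hbot Hval.
have [s1 [tp [E1 Hh1 Hr1 Htp P]]] :=
  pop_loop_ok H0 (erefl (regs s 2)) ltac:(lia) H4 hx HF Hbot Hval.
set sp' := regs s1 2 in Htp P *; set f' := regs s1 3 in P *.
have hsp' : sp' <= regs s 2 by case: P.
pose s2 := State (upd (regs s1) 2 sp'.+1) (heap s1).
have E2 : exec W (SAssign 2 (EAdd (EReg 2) (EConst 1))) s1 1 s2.
  by apply: ExAssign; eval_simpl; rewrite -/sp'; eval_simpl.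
pose s3 := State (regs s2) (upd (heap s2) (n + n + sp'.+1) x).
have E3 : exec W (SStore (EAdd stack_base (EReg 2)) (EReg 4)) s2 1 s3.
  by apply: ExStore; eval_simpl; rewrite ?Hr1 // ?H0 ?H4; eval_simpl.
pose s4 := State (upd (regs s3) 1 i.+1) (heap s3).
have E4 : exec W (SAssign 1 (EAdd (EReg 1) (EConst 1))) s3 1 s4.
  by apply: ExAssign; eval_simpl; rewrite Hr1 // H1; eval_simpl.
exists s4, (tp + (1 + (1 + 1))), sp', f'; split => //.
- by apply: ExSeq E1 _; apply: ExSeq E2 _; exact: ExSeq E3 E4.
- lia.
- by split => //; rewrite /= Hr1.
- by move=> ad; rewrite /= Hh1.
Qed.

End RamStack.

Definition position_expr (dir : bool) : expr :=
  if dir then ESub (ESub (EReg 0) (EConst 1)) (EReg 1) else EReg 1.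
Definition value_expr (comp : bool) : expr :=
  if comp then ESub (ESub (EReg 0) (EConst 1)) (ELoad (EReg 5)) else ELoad (EReg 5).

Definition scan_mark (dir comp : bool) (code : nat) : stmt :=
  SSeq (SAssign 5 (position_expr dir)) (SSeq (SAssign 4 (value_expr comp))
    (SIf (ELt (EReg 3) (EReg 4)) (SStore (EAdd (EReg 0) (EReg 5)) (EConst code)) SSkip)).

Definition scan_body (dir comp : bool) (code : nat) : stmt :=
  SSeq (scan_mark dir comp code) scan_push.

Definition scan_loop (dir comp : bool) (code : nat) : stmt :=
  SWhile (ELt (EReg 1) (EReg 0)) (scan_body dir comp code).

Definition pass (dir comp : bool) (code : nat) : stmt :=
  SSeq (SAssign 1 (EConst 0)) (SSeq (SAssign 2 (EConst 0))
    (SSeq (SStore stack_base (EConst 0)) (SSeq (SAssign 3 (EReg 0)) (scan_loop dir comp code)))).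

Section Pass.
Variables (W : nat) (p : seq nat) (dir comp : bool) (code : nat).
Local Notation n := (size p).
Local Notation q := (view_at p dir comp).
Hypotheses (HW : 4 * n + 4 <= W) (Hcode : code <= 4)
  (p_lt : forall a, a < n -> nth 0 p a < n).

Lemma scan_mark_exec s i : regs s 0 = n -> regs s 1 = i -> i < n ->
  (forall a, a < n -> heap s a = nth 0 p a) -> regs s 3 <= n ->
  exists s', [/\ exec W (scan_mark dir comp code) s 4 s', regs s' 4 = q i,
    (forall r, r != 4 -> r != 5 -> regs s' r = regs s r)
  & heap s' =1 fun ad =>
      if (regs s 3 < q i) && (ad == n + mirror n dir i) then code else heap s ad].
Proof.
move=> H0 H1 hi Hin HF; set a := mirror n dir i; set x := q i; set f := regs s 3.
have ha : a < n := mirror_lt dir hi.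
pose s1 := State (upd (regs s) 5 a) (heap s).
have E1 : exec W (SAssign 5 (position_expr dir)) s 1 s1.
  apply: ExAssign; rewrite /position_expr /a /mirror.
  by case: dir; eval_simpl; rewrite H0 H1; eval_simpl.
pose s2 := State (upd (regs s1) 4 x) (heap s1).
have E2 : exec W (SAssign 4 (value_expr comp)) s1 1 s2.
  apply: ExAssign; rewrite /value_expr /x /view_at -/a.
  have := p_lt ha; rewrite -(Hin a ha) => hb.
  by case: comp; eval_simpl; rewrite (Hin a ha); eval_simpl.
have hx : x < n := view_lt p_lt dir comp hi.
case: (ltnP f x) => hfx.
- exists (State (regs s2) (upd (heap s2) (n + a) code)); split => //.
  + apply: ExSeq E1 _; apply: ExSeq E2 _.
    apply: (@ExIfT _ _ _ _ _ _ 1) => //; first by eval_simpl; rewrite -/f hfx.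
    by apply: ExStore; eval_simpl; rewrite H0; eval_simpl.
  + by move=> r /= /negbTE -> /negbTE ->.
- exists s2; split => //.
  + apply: ExSeq E1 _; apply: ExSeq E2 _.
    apply: ExIfF; last exact: ExSkip.
    by eval_simpl; rewrite -/f ltnNge hfx.
  + by move=> r /= /negbTE -> /negbTE ->.
Qed.

Lemma scan_body_exec s i : regs s 0 = n -> regs s 1 = i -> i < n ->
  (forall a, a < n -> heap s a = nth 0 p a) -> regs s 2 <= i -> regs s 3 <= n ->
  stack_of n s 0 = 0 -> (forall k, k <= regs s 2 -> stack_of n s k <= n) ->
  exists s' t sp' f', [/\ exec W (scan_body dir comp code) s t s',
    t + 4 * sp'.+1 <= 12 + 4 * regs s 2,
    pop_result (stack_of n s) (regs s 2) (q i) (regs s 3) sp' f',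
    [/\ regs s' 0 = n, regs s' 1 = i.+1, regs s' 2 = sp'.+1 & regs s' 3 = f']
  & forall ad, heap s' ad = if ad == n + n + sp'.+1 then q i
      else if (regs s 3 < q i) && (ad == n + mirror n dir i) then code else heap s ad].
Proof.
move=> H0 H1 hi Hin Hsp HF Hbot Hval.
have [s1 [E1 R4 R1 H1s]] := scan_mark_exec H0 H1 hi Hin HF.
have hmi := mirror_lt dir hi.
have St1 : stack_of n s1 =1 stack_of n s.
  move=> k; rewrite /stack_of H1s; case: (_ < _) => //=.
  by have -> : (n + n + k == n + mirror n dir i) = false by apply/eqP; lia.
have [s' [t [sp' [f' [E2 T P R H]]]]] := @scan_push_exec W n HW s1 i (q i)
  ltac:(by rewrite R1) ltac:(by rewrite R1) hi ltac:(by rewrite R1) R4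
  (view_lt p_lt dir comp hi) ltac:(by rewrite R1) ltac:(by rewrite St1)
  ltac:(by move=> k; rewrite R1 // St1; apply: Hval).
exists s', (4 + t), sp', f'; split => //.
- exact: ExSeq E1 E2.
- by move: T; rewrite R1 //; lia.
- by move: P; rewrite !R1 //; apply: pop_result_ext.
- by move=> ad; rewrite H /upd H1s.
Qed.

Variable h0 : nat -> nat.

Record pass_inv (s : state) (i : nat) : Prop := {
  inv_n : regs s 0 = n;
  inv_i : regs s 1 = i;
  inv_le : i <= n;
  inv_input : forall a, a < n -> heap s a = nth 0 p a;
  inv_marked : forall j, j < i -> is_NE_of q j -> heap s (n + mirror n dir j) = code;
  inv_unmarked : forall j, j < n -> ~ (j < i /\ is_NE_of q j) ->
    heap s (n + mirror n dir j) = h0 (n + mirror n dir j);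
  inv_stack : stack_inv n q i (regs s 2) (stack_of n s) (regs s 3) }.

Lemma scan_body_ok s i : pass_inv s i -> i < n ->
  exists s' t, [/\ exec W (scan_body dir comp code) s t s', pass_inv s' i.+1
    & t + 4 * regs s' 2 <= 12 + 4 * regs s 2].
Proof.
move=> I hi; have S := inv_stack I.
have Hval k : k <= regs s 2 -> stack_of n s k <= n.
  case: k => [|k] hk; first by rewrite (stack_bottom S).
  have [|a ha ->] := stack_values S (k := k.+1); first lia.
  by apply: ltnW; apply: (view_lt p_lt); lia.
have [s' [t [sp' [f' [E T P [R0 R1 R2 R3] H]]]]] := scan_body_exec (inv_n I) (inv_i I) hi
  (inv_input I) (stack_sp_le S) (stack_f_le S) (stack_bottom S) Hval.
have hx : q i < n := view_lt p_lt dir comp hi.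
have hmi : mirror n dir i < n := mirror_lt dir hi.
have out_neq j : j < n -> (n + mirror n dir j == n + n + sp'.+1) = false.
  by move=> hj; apply/eqP; have := mirror_lt dir hj; lia.
have NEi := stack_inv_NE S hx.
exists s', t; split => //; last by rewrite R2.
split.
- exact: R0.
- exact: R1.
- lia.
- move=> a ha; rewrite H (inv_input I) //.
  have -> : (a == n + n + sp'.+1) = false by apply/eqP; lia.
  have -> : (a == n + mirror n dir i) = false by apply/eqP; lia.
  by rewrite andbF.
- move=> j hj hNE; rewrite H out_neq; last lia.
  case: (ltnP j i) => hji.
  + by rewrite (inv_marked I hji hNE); case: ifP.
  + have ej : j = i by lia.
    by subst j; rewrite eqxx andbT; move/NEi: hNE => ->.
- move=> j hj hnot; rewrite H out_neq // eqn_add2l.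
  case: (eqVneq j i) => [ej | nji].
  + subst j; rewrite eqxx andbT.
    case: ltnP => [/NEi hNE | _]; first by case: hnot.
    by apply: (inv_unmarked I) => // -[]; rewrite ltnn.
  + have -> : (mirror n dir j == mirror n dir i) = false.
      by apply/eqP => e; move: nji; rewrite (mirror_inj hj hi e) eqxx.
    rewrite andbF; apply: (inv_unmarked I) => // -[hji hNE]; apply: hnot.
    by split => //; lia.
- rewrite R2 R3; apply: stack_inv_ext (stack_inv_step S P).
  move=> k; rewrite /stack_of H /upd eqn_add2l.
  case: (k == sp'.+1) => //.
  have -> : (n + n + k == n + mirror n dir i) = false by apply/eqP; lia.
  by rewrite andbF.
Qed.

Lemma scan_loop_ok k : forall s i, n - i = k -> pass_inv s i ->
  exists s' t, [/\ exec W (scan_loop dir comp code) s t s', pass_inv s' n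
    & t <= 13 * (n - i) + 4 * regs s 2 + 1].
Proof.
elim: k => [|k IH] s i hk I.
- have ei : i = n by have := inv_le I; lia.
  subst i; exists s, 1; split => //; last lia.
  by apply: ExWhileF; eval_simpl; rewrite (inv_n I) (inv_i I); eval_simpl; rewrite ltnn.
- have hi : i < n by lia.
  have [s1 [tb [Eb I1 Htb]]] := scan_body_ok I hi.
  have [s' [tl [El I' Htl]]] := IH s1 i.+1 ltac:(lia) I1.
  exists s', (tb + tl).+1; split => //; last lia.
  apply: (@ExWhileT _ _ _ _ _ _ 1) => //; last exact: El; last exact: Eb.
  by eval_simpl; rewrite (inv_n I) (inv_i I); eval_simpl; rewrite hi.
Qed.

Lemma pass_ok s : regs s 0 = n -> heap s = h0 -> (forall a, a < n -> h0 a = nth 0 p a) ->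
  exists s' t, [/\ exec W (pass dir comp code) s t s', t <= 13 * n + 5,
    regs s' 0 = n, (forall a, a < n -> heap s' a = nth 0 p a)
  & forall j, j < n ->
      (type_of_view dir comp p j -> heap s' (n + j) = code) /\
      (~ type_of_view dir comp p j -> heap s' (n + j) = h0 (n + j))].
Proof.
move=> H0 Hh Hin.
pose s1 := State (upd (regs s) 1 0) (heap s).
pose s2 := State (upd (regs s1) 2 0) (heap s1).
pose s3 := State (regs s2) (upd (heap s2) (n + n) 0).
pose s4 := State (upd (regs s3) 3 n) (heap s3).
have E1 : exec W (SAssign 1 (EConst 0)) s 1 s1 by apply: ExAssign; eval_simpl.
have E2 : exec W (SAssign 2 (EConst 0)) s1 1 s2 by apply: ExAssign; eval_simpl.
have E3 : exec W (SStore stack_base (EConst 0)) s2 1 s3.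
  by apply: ExStore; eval_simpl; rewrite H0; eval_simpl.
have E4 : exec W (SAssign 3 (EReg 0)) s3 1 s4.
  by apply: ExAssign; eval_simpl; rewrite H0; eval_simpl.
have I4 : pass_inv s4 0.
  split => //=; rewrite ?Hh.
  - move=> a ha; rewrite -Hin //.
    by have -> : (a == n + n) = false by apply/eqP; lia.
  - move=> j hj _; have -> : (n + mirror n dir j == n + n) = false.
      by apply/eqP; have := mirror_lt dir hj; lia.
    by [].
  - by apply: stack_inv_init; rewrite /stack_of /= addn0 eqxx.
have [s' [tl [El I' Htl]]] := scan_loop_ok (erefl (n - 0)) I4.
exists s', (1 + (1 + (1 + (1 + tl)))); split.
- by apply: ExSeq E1 _; apply: ExSeq E2 _; apply: ExSeq E3 _; exact: ExSeq E4 El.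
- by move: Htl; rewrite /= subn0; lia.
- exact: inv_n I'.
- exact: inv_input I'.
- move=> j hj; have hmj := mirror_lt dir hj.
  have := inv_marked I' hmj; have := inv_unmarked I' hmj.
  rewrite mirrorK // -(NE_view_type p_lt dir comp hj) => Hu Hm.
  by split => [/Hm | hnot]; [| apply: Hu => -[]].
Qed.

End Pass.

Definition classify : stmt :=
  SSeq (pass false false 1) (SSeq (pass true false 2)
    (SSeq (pass true true 3) (pass false true 4))).

(* What the four passes leave in the output cell of position [j]: the code
   of the last pass that marked it. *)
Definition last_mark_code (p : seq nat) (j o : nat) : Prop :=
  [/\ is_SE p j -> o = 4,
      ~ is_SE p j -> is_SW p j -> o = 3,
      ~ is_SE p j -> ~ is_SW p j -> is_NW p j -> o = 2,
      ~ is_SE p j -> ~ is_SW p j -> ~ is_NW p j -> is_NE p j -> o = 1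
    & ~ is_SE p j -> ~ is_SW p j -> ~ is_NW p j -> ~ is_NE p j -> o = 0].

Lemma classify_ok W p : 4 * size p + 4 <= W ->
  (forall a, a < size p -> nth 0 p a < size p) ->
  exists s' t, [/\ exec W classify (init_state p) t s', t <= 52 * size p + 20
    & forall j, j < size p -> last_mark_code p j (heap s' (size p + j))].
Proof.
move=> HW p_lt.
have [s1 [t1 [E1 T1 R1 I1 O1]]] :=
  @pass_ok W p false false 1 HW isT p_lt _ (init_state p) erefl erefl (fun _ _ => erefl).
have [s2 [t2 [E2 T2 R2 I2 O2]]] := @pass_ok W p true false 2 HW isT p_lt _ s1 R1 erefl I1.
have [s3 [t3 [E3 T3 R3 I3 O3]]] := @pass_ok W p true true 3 HW isT p_lt _ s2 R2 erefl I2.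
have [s4 [t4 [E4 T4 _ _ O4]]] := @pass_ok W p false true 4 HW isT p_lt _ s3 R3 erefl I3.
exists s4, (t1 + (t2 + (t3 + t4))); split; last 1 first.
- move=> j hj.
  have [O1a O1b] := O1 j hj; have [O2a O2b] := O2 j hj.
  have [O3a O3b] := O3 j hj; have [O4a O4b] := O4 j hj.
  split=> [hSE | nSE hSW | nSE nSW hNW | nSE nSW nNW hNE | nSE nSW nNW nNE].
  + exact: O4a.
  + by rewrite O4b // O3a.
  + by rewrite O4b // O3b // O2a.
  + by rewrite O4b // O3b // O2b // O1a.
  + by rewrite O4b // O3b // O2b // O1b //= nth_default //; lia.
- by apply: ExSeq E1 _; apply: ExSeq E2 _; exact: ExSeq E3 E4.
- lia.
Qed.

Lemma last_mark_correct p j o : skew_merged p -> j < size p ->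
  last_mark_code p j o -> correct_code p j o.
Proof.
move=> [_ [m [Hsz [Hi Hd]]]] hj [c4 c3 c2 c1 c0].
have LR := left_right_types_disjoint Hsz Hi Hd hj.
have LL := NE_SE_disjoint Hsz Hi Hd hj.
have RR := @NW_SW_disjoint p m Hsz Hi Hd j.
rewrite /correct_code /is_central.
case: (classic (is_SE p j)) => [hSE | nSE].
  by rewrite (c4 hSE); split; split => H; (try discriminate); (try done); tauto.
case: (classic (is_SW p j)) => [hSW | nSW].
  by rewrite (c3 nSE hSW); split; split => H; (try discriminate); (try done); tauto.
case: (classic (is_NW p j)) => [hNW | nNW].
  by rewrite (c2 nSE nSW hNW); split; split => H; (try discriminate); (try done); tauto.
case: (classic (is_NE p j)) => [hNE | nNE].
  by rewrite (c1 nSE nSW nNW hNE); split; split => H; (try discriminate); (try done); tauto.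
by rewrite (c0 nSE nSW nNW nNE); split; split => H; (try discriminate); (try done); tauto.
Qed.

Lemma perm_nth_lt p a : is_perm p -> a < size p -> nth 0 p a < size p.
Proof.
move=> Hp ha; have : nth 0 p a \in iota 0 (size p) by rewrite -(perm_mem Hp) mem_nth.
by rewrite mem_iota.
Qed.

Theorem lemma2 :
  exists (P : stmt) (C K : nat),
    forall p : seq nat, skew_merged p ->
      exists (s' : state) (t : nat),
        [/\ exec ((size p).+2 ^ K) P (init_state p) t s',
            t <= C * (size p).+1
          & forall j, j < size p -> correct_code p j (heap s' (size p + j))].
Proof.
exists classify, 60, 2 => p Hskew.
have HW : 4 * size p + 4 <= (size p).+2 ^ 2 by rewrite expnS expn1; nia.
have [s' [t [E T O]]] := classify_ok HW (fun a => perm_nth_lt Hskew.1).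
exists s', t; split => //; first lia.
by move=> j hj; apply: last_mark_correct (O j hj).
Qed.
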